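(* Let $\alpha,\beta,\gamma$ be partitions with $\alpha_1\le2$ and let $\Gamma$ be an LR-tableau of type $(\alpha,\beta,\gamma)$ such that every row of $\Gamma$ contains at most one (non-empty) box. Then in the poset $(\mathcal D_\Gamma,\le_{\rm arc})$ all saturated chains have the same length.
   Context: For a partition $\lambda$, $\lambda'$ is its conjugate; here the diagram of $\lambda$ is drawn with $\lambda'_i$ boxes in row $i$, so for $\gamma\subseteq\beta$ the $i$-th row of the skew diagram $\beta\setminus\gamma$ consists of the boxes in columns $\gamma'_i+1,\dots,\beta'_i$. With $\alpha_1\le 2$, $\alpha'=(\alpha'_1,\alpha'_2)$. An LR-tableau of type $(\alpha,\beta,\gamma)$ is a filling of $\beta\setminus\gamma$ with $\alpha'_1$ entries $1$ and $\alpha'_2$ entries $2$, weakly increasing along rows, strictly increasing down columns, and such that for each $c\ge0$ the number of entries $1$ in columns to the right of column $c$ is at least the number of entries $2$ there. Place the positive integers on a line in decreasing order from left to right. An arc is a pair $(m,n)$, $m>n$ positive integers (source $m$, target $n$); a pole at $n$ is regarded as an arc $(\infty,n)$. An arc diagram of type $(\alpha,\beta,\gamma)$ is a finite multiset of $\alpha'_2$ arcs and $\alpha'_1-\alpha'_2$ poles with, for each $i$, exactly $\beta'_i-\gamma'_i$ members having source or target $i$. It has LR type $\Gamma$ if for each $i$ the number of arcs with source $i$ equals the number of entries $2$ in row $i$ of $\Gamma$; $\mathcal D_\Gamma$ is the set of arc diagrams of type $(\alpha,\beta,\gamma)$ of LR type $\Gamma$. Members $(m,n),(k,r)$ cross iff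 $r<n<k<m$ or $n<r<m<k$. Moves: for $a>b>c>d$, (A) replaces arcs $(a,c),(b,d)$ by $(a,d),(b,c)$; for $a>b>c$, (B) replaces arc $(a,c)$ and pole $(\infty,b)$ by arc $(a,b)$ and pole $(\infty,c)$; (C) replaces arcs $(a,c),(b,d)$ by $(a,b),(c,d)$; (D) replaces arc $(a,c)$ and pole $(\infty,b)$ by arc $(b,c)$ and pole $(\infty,a)$. $\Delta\le_{\rm arc}\Delta'$ iff $\Delta$ is obtained from $\Delta'$ by a finite (possibly empty) sequence of moves; $\mathcal D_\Gamma$ carries the restricted order. A chain is saturated if it has no refinement, i.e. is not properly contained in another chain of the poset. *)

From mathcomp Require Import all_boot.
From mathcomp Require Import finmap multiset.
From Stdlib Require Import Relations.

Set Implicit Arguments.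
Unset Strict Implicit.
Unset Printing Implicit Defensive.

Local Open Scope nat_scope.

Definition is_partition (l : seq nat) : bool :=
  sorted geq l && all (fun x => 0 < x) l.

(* conjugate: conj l i = l'_i = #{ j | l_j >= i } (used for i >= 1). *)
Definition conj (l : seq nat) (i : nat) : nat := count (fun x => i <= x) l.

(* Row i (i >= 1) of beta \ gamma consists of columns gamma'_i+1 .. beta'_i. *)
Definition is_box (beta gamma : seq nat) (i j : nat) : bool :=
  [&& 0 < i, conj gamma i < j & j <= conj beta i].

(* All boxes lie in rows 1 .. beta_1 and columns 1 .. size beta = beta'_1. *)
Definition nrows (beta : seq nat) : nat := head 0 beta.
Definition ncols (beta : seq nat) : nat := size beta.

(* A filling is a function (row, column) |-> entry; only its values on the
   boxes of beta \ gamma are relevant. *)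
Definition filling := nat -> nat -> nat.

Definition row_count (beta gamma : seq nat) (T : filling) (e i : nat) : nat :=
  \sum_(1 <= j < (ncols beta).+1) (is_box beta gamma i j && (T i j == e)).

Definition right_count (beta gamma : seq nat) (T : filling) (e c : nat) : nat :=
  \sum_(1 <= i < (nrows beta).+1) \sum_(1 <= j < (ncols beta).+1)
     [&& c < j, is_box beta gamma i j & T i j == e].

Definition total_count (beta gamma : seq nat) (T : filling) (e : nat) : nat :=
  right_count beta gamma T e 0.

(* LR-tableau of type (alpha, beta, gamma) with alpha_1 <= 2,
   alpha' = (alpha'_1, alpha'_2). *)
Definition LR_tableau (alpha beta gamma : seq nat) (T : filling) : Prop :=
  (forall i j, is_box beta gamma i j -> T i j = 1 \/ T i j = 2) /\
  total_count beta gamma T 1 = conj alpha 1 /\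
  total_count beta gamma T 2 = conj alpha 2 /\
  (forall i j, is_box beta gamma i j -> is_box beta gamma i j.+1 ->
     T i j <= T i j.+1) /\
  (forall i j, is_box beta gamma i j -> is_box beta gamma i.+1 j ->
     T i j < T i.+1 j) /\
  (* lattice word condition *)
  (forall c, right_count beta gamma T 2 c <= right_count beta gamma T 1 c).

(* A member is (Some m, n) for the arc (m, n) or (None, n) for the pole
   (infinity, n). *)
Definition member := (option nat * nat)%type.
Definition diagram := multiset member.

Definition is_arc (x : member) : bool := if x.1 is Some _ then true else false.
Definition is_pole (x : member) : bool := ~~ is_arc x.

Definition mcount (D : diagram) (P : pred member) : nat :=
  \sum_(x <- finsupp D | P x) D x.

Definition well_formed_member (x : member) : bool :=
  (0 < x.2) && (if x.1 is Some m then x.2 < m else true).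

Definition touches (i : nat) (x : member) : bool := (x.1 == Some i) || (x.2 == i).

Definition arc_diagram_of_type (alpha beta gamma : seq nat) (D : diagram) : Prop :=
  (forall x, x \in finsupp D -> well_formed_member x) /\
  mcount D is_arc = conj alpha 2 /\
  mcount D is_pole = conj alpha 1 - conj alpha 2 /\
  (forall i, 0 < i -> mcount D (touches i) = conj beta i - conj gamma i).

Definition has_LR_type (beta gamma : seq nat) (T : filling) (D : diagram) : Prop :=
  forall i, 0 < i -> mcount D (fun x => x.1 == Some i) = row_count beta gamma T 2 i.

Definition D_Gamma (alpha beta gamma : seq nat) (T : filling) (D : diagram) : Prop :=
  arc_diagram_of_type alpha beta gamma D /\ has_LR_type beta gamma T D.

Definition replace2 (D : diagram) (x y x' y' : member) : diagram :=
  msetD (msetB D (msetD (msetn 1 x) (msetn 1 y))) (msetD (msetn 1 x') (msetn 1 y')).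

Definition move (D E : diagram) : Prop :=
  (exists a b c d, [&& d < c, c < b & b < a] /\
     msubset (msetD (msetn 1 (Some a, c)) (msetn 1 (Some b, d))) D /\
     E = replace2 D (Some a, c) (Some b, d) (Some a, d) (Some b, c))      (* A *)
  \/
  (exists a b c, [&& c < b & b < a] /\
     msubset (msetD (msetn 1 (Some a, c)) (msetn 1 (None, b))) D /\
     E = replace2 D (Some a, c) (None, b) (Some a, b) (None, c))          (* B *)
  \/
  (exists a b c d, [&& d < c, c < b & b < a] /\
     msubset (msetD (msetn 1 (Some a, c)) (msetn 1 (Some b, d))) D /\
     E = replace2 D (Some a, c) (Some b, d) (Some a, b) (Some c, d))      (* C *)
  \/
  (exists a b c, [&& c < b & b < a] /\
     msubset (msetD (msetn 1 (Some a, c)) (msetn 1 (None, b))) D /\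
     E = replace2 D (Some a, c) (None, b) (Some b, c) (None, a)).         (* D *)

Definition arc_le (D D' : diagram) : Prop := clos_refl_trans diagram move D' D.

Local Open Scope fset_scope.

Definition is_chain (alpha beta gamma : seq nat) (T : filling) (C : {fset diagram}) : Prop :=
  (forall D, D \in C -> D_Gamma alpha beta gamma T D) /\
  (forall D E, D \in C -> E \in C -> arc_le D E \/ arc_le E D).

Definition saturated_chain (alpha beta gamma : seq nat) (T : filling) (C : {fset diagram}) : Prop :=
  is_chain alpha beta gamma T C /\
  (forall C', is_chain alpha beta gamma T C' -> C `<=` C' -> C' = C).

Definition chain_length (C : {fset diagram}) : nat := #|` C| - 1.

From mathcomp Require Import all_boot finmap multiset zify.
From Stdlib Require Import Relations.

(* Moves (C) and (D) lower the source of an arc, whereas all diagrams of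
   D_Gamma have the same arc sources; hence between elements of D_Gamma only
   moves (A) and (B) occur, and each of them raises the number of nested pairs
   of members.  When every row of Gamma has at most one box, every point is an
   endpoint of at most one member of a diagram in D_Gamma.  Then a move raising
   the nesting number by more than one factors through two or three moves that
   use a member lying between the moved ones, so the nesting number is a rank
   function on D_Gamma.  Comparing two extremal diagrams at the smallest source
   where they differ produces a crossing (resp. nested) pair that admits a move
   out of (resp. into) one of them, so D_Gamma has a unique maximal and a
   unique minimal element.  A saturated chain meets every rank between these
   two, so its length is the difference of their ranks. *)

Set Implicit Arguments.
Unset Strict Implicit.
Unset Printing Implicit Defensive.

Local Open Scope nat_scope.

Section SeqSums.
Variables (I : eqType) (r : seq I).
Implicit Types F G : I -> nat.

Lemma leq_sum_seq F G :
  {in r, forall i, F i <= G i} -> \sum_(i <- r) F i <= \sum_(i <- r) G i.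
Proof.
move=> FG; rewrite big_seq_cond [X in _ <= X]big_seq_cond.
by apply: leq_sum => i /andP[/FG].
Qed.

Lemma leq_term_sum_seq F i : i \in r -> F i <= \sum_(j <- r) F j.
Proof. by move=> ir; rewrite (big_rem i ir) leq_addr. Qed.

Lemma ltn_sum_seq_witness F G :
  \sum_(i <- r) F i < \sum_(i <- r) G i -> exists2 i, i \in r & F i < G i.
Proof.
move=> sumFG.
have [/hasP[i ir FGi]|/hasPn GF] := boolP (has (fun i => F i < G i) r).
  by exists i.
by move: sumFG; rewrite ltnNge leq_sum_seq // => i /GF; rewrite -leqNgt.
Qed.

Lemma sum_seq_gt0_witness F : 0 < \sum_(i <- r) F i -> exists2 i, i \in r & 0 < F i.
Proof. by move=> pos; apply: (ltn_sum_seq_witness (F := fun=> 0)); rewrite big1. Qed.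

End SeqSums.

Section SeqExtremum.
Variables (I : eqType) (s : seq I) (a : pred I) (f : I -> nat).
Hypothesis has_a : has a s.

Lemma ex_argmin_seq : exists2 x, x \in s & a x /\ {in s, forall y, a y -> f x <= f y}.
Proof.
have ex : exists n, has (fun x => a x && (f x == n)) s.
  by case/hasP: has_a => x xs ax; exists (f x); apply/hasP; exists x; rewrite ?ax ?eqxx.
case: (ex_minnP ex) => n /hasP[x xs /andP[ax /eqP fx]] min_n.
exists x => //; split=> // y ys ay; rewrite fx; apply: min_n.
by apply/hasP; exists y; rewrite ?ay ?eqxx.
Qed.

Lemma ex_argmax_seq : exists2 x, x \in s & a x /\ {in s, forall y, a y -> f y <= f x}.
Proof.
have ex : exists n, has (fun x => a x && (f x == n)) s.
  by case/hasP: has_a => x xs ax; exists (f x); apply/hasP; exists x; rewrite ?ax ?eqxx.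
have bound n : has (fun x => a x && (f x == n)) s -> n <= \sum_(x <- s) f x.
  by case/hasP=> x xs /andP[_ /eqP <-]; apply: leq_term_sum_seq.
case: (ex_maxnP ex bound) => n /hasP[x xs /andP[ax /eqP fx]] max_n.
exists x => //; split=> // y ys ay; rewrite fx; apply: max_n.
by apply/hasP; exists y; rewrite ?ay ?eqxx.
Qed.

End SeqExtremum.

Section RankedChains.
Variables (K : choiceType) (P : K -> Prop) (le : K -> K -> Prop) (rk : K -> nat).
Local Open Scope fset_scope.

(* [saturated_chain] is [saturated_in (D_Gamma alpha beta gamma Gamma) arc_le]. *)
Definition chain_in (C : {fset K}) : Prop :=
  (forall x, x \in C -> P x) /\ (forall x y, x \in C -> y \in C -> le x y \/ le y x).

Definition saturated_in (C : {fset K}) : Prop :=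
  chain_in C /\ (forall C', chain_in C' -> C `<=` C' -> C' = C).

Definition maximal_in (x : K) : Prop := P x /\ forall y, P y -> le x y -> y = x.
Definition minimal_in (x : K) : Prop := P x /\ forall y, P y -> le y x -> y = x.

Hypothesis le_refl : forall x, le x x.
Hypothesis le_trans : forall x y z, le x y -> le y z -> le x z.
Hypothesis rk_le : forall x y, P x -> P y -> le x y -> x = y \/ rk y < rk x.
Hypothesis rk_interpolate : forall x y, P x -> P y -> le x y -> rk y + 1 < rk x ->
  exists2 z, P z & [/\ le x z, le z y & rk y < rk z < rk x].

Lemma comparable_le_rk x y : P x -> P y -> le x y \/ le y x -> rk y <= rk x -> le x y.
Proof.
move=> Px Py [//|yx] le_rk; case: (rk_le Py Px yx) => [->|lt_rk]; first exact: le_refl.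
by move: le_rk; rewrite leqNgt lt_rk.
Qed.

Lemma saturated_mem C y : saturated_in C -> P y ->
  (forall x, x \in C -> le x y \/ le y x) -> y \in C.
Proof.
move=> [[CP Ccmp] Cmax] Py ycmp.
have chainU : chain_in (y |` C).
  split=> [x|x z]; first by rewrite in_fset1U => /orP[/eqP->|/CP].
  rewrite !in_fset1U => /orP[/eqP->|xC] /orP[/eqP->|zC].
  - by left; apply: le_refl.
  - by case: (ycmp z zC); [right|left].
  - exact: ycmp.
  - exact: Ccmp.
by rewrite -(Cmax _ chainU (fsubsetUr _ _)) fset1U1.
Qed.

Lemma saturated_top C x : saturated_in C -> x \in C ->
  {in C, forall y, rk x <= rk y} -> maximal_in x.
Proof.
move=> satC xC min_x; have [[CP Ccmp] _] := satC; split=> [|y Py xy]; first exact: CP.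
have yC : y \in C.
  apply: saturated_mem satC Py _ => z zC; left; apply: le_trans xy.
  exact: comparable_le_rk (CP z zC) (CP x xC) (Ccmp z x zC xC) (min_x z zC).
case: (rk_le (CP x xC) Py xy) => [-> //|lt_rk].
by move: (min_x y yC); rewrite leqNgt lt_rk.
Qed.

Lemma saturated_bottom C x : saturated_in C -> x \in C ->
  {in C, forall y, rk y <= rk x} -> minimal_in x.
Proof.
move=> satC xC max_x; have [[CP Ccmp] _] := satC; split=> [|y Py yx]; first exact: CP.
have yC : y \in C.
  apply: saturated_mem satC Py _ => z zC; right; apply: le_trans yx _.
  exact: comparable_le_rk (CP x xC) (CP z zC) (Ccmp x z xC zC) (max_x z zC).
case: (rk_le Py (CP x xC) yx) => [// |lt_rk].
by move: (max_x y yC); rewrite leqNgt lt_rk.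
Qed.

Lemma saturated_rank_interval C x z k : saturated_in C -> x \in C -> z \in C ->
  rk x <= k <= rk z -> exists2 y, y \in C & rk y = k.
Proof.
move=> satC xC zC /andP[xk kz]; have [[CP Ccmp] _] := satC.
have [/hasP[y yC /eqP yk]|/hasPn no_k] := boolP (has (fun y => rk y == k) C).
  by exists y.
have [V VC [Vk Vmax]] : exists2 V, V \in C & rk V < k /\ {in C, forall y, rk y < k -> rk y <= rk V}.
  by apply: ex_argmax_seq; apply/hasP; exists x => //; have := no_k x xC; lia.
have [U UC [Uk Umin]] : exists2 U, U \in C & k < rk U /\ {in C, forall y, k < rk y -> rk U <= rk y}.
  by apply: ex_argmin_seq; apply/hasP; exists z => //; have := no_k z zC; lia.
have UV := comparable_le_rk (CP U UC) (CP V VC) (Ccmp U V UC VC) (ltnW (ltn_trans Vk Uk)).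
have [F PF [UF FV /andP[VF FU]]] := rk_interpolate (CP U UC) (CP V VC) UV (ltac:(lia)).
have FC : F \in C.
  apply: saturated_mem satC PF _ => y yC; have := no_k y yC.
  case: (ltnP (rk y) k) => yk yNk.
    right; apply: le_trans FV _.
    exact: comparable_le_rk (CP V VC) (CP y yC) (Ccmp V y VC yC) (Vmax y yC yk).
  left; apply: le_trans UF.
  by apply: comparable_le_rk (CP y yC) (CP U UC) (Ccmp y U yC UC) (Umin y yC _); lia.
have := no_k F FC; case: (ltnP (rk F) k) => Fk FNk.
  by have := Vmax F FC Fk; lia.
by have := Umin F FC; lia.
Qed.

Lemma saturated_card C x z : saturated_in C -> x \in C -> z \in C ->
  {in C, forall y, rk x <= rk y <= rk z} -> #|` C| = (rk z - rk x).+1.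
Proof.
move=> satC xC zC bounds; have [[CP Ccmp] _] := satC.
have rk_inj : {in C &, injective rk}.
  move=> y1 y2 y1C y2C eq_rk; case: (Ccmp y1 y2 y1C y2C) => le12.
    by case: (rk_le (CP y1 y1C) (CP y2 y2C) le12) => //; rewrite eq_rk ltnn.
  by case: (rk_le (CP y2 y2C) (CP y1 y1C) le12) => //; rewrite eq_rk ltnn.
have rk_uniq : uniq (map rk C) by rewrite (map_inj_in_uniq rk_inj) fset_uniq.
have rk_range : map rk C =i iota (rk x) (rk z - rk x).+1.
  move=> k; rewrite mem_iota; apply/mapP/idP => [[y yC ->]|k_range].
    by have := bounds y yC; lia.
  have k_xz : rk x <= k <= rk z by have := bounds z zC; lia.
  by have [y yC <-] := saturated_rank_interval satC xC zC k_xz; exists y.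
by have := perm_size (uniq_perm rk_uniq (iota_uniq _ _) rk_range); rewrite size_map size_iota.
Qed.

Lemma saturated_fset0 : saturated_in fset0 -> forall x, ~ P x.
Proof.
move=> [_ max0] x Px.
have chain1 : chain_in [fset x].
  by split=> [y|y1 y2]; rewrite ?inE => /eqP-> //; move/eqP->; left.
by have := max0 _ chain1 (fsub0set _) => /fsetP/(_ x); rewrite inE eqxx.
Qed.

Lemma saturated_extremal C : saturated_in C -> C != fset0 ->
  exists x z, [/\ maximal_in x, minimal_in z & #|` C| = (rk z - rk x).+1].
Proof.
move=> satC /fset0Pn[y yC]; have hasC : has predT C by apply/hasP; exists y.
have [x xC [_ x_min]] := ex_argmin_seq rk hasC.
have [z zC [_ z_max]] := ex_argmax_seq rk hasC.
exists x, z; split.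
- by apply: saturated_top satC xC _ => w wC; apply: x_min.
- by apply: saturated_bottom satC zC _ => w wC; apply: z_max.
- by apply: saturated_card => // w wC; rewrite x_min ?z_max.
Qed.

Hypothesis maximal_uniq : forall x y, maximal_in x -> maximal_in y -> x = y.
Hypothesis minimal_uniq : forall x y, minimal_in x -> minimal_in y -> x = y.

Theorem saturated_card_eq C1 C2 : saturated_in C1 -> saturated_in C2 -> #|` C1| = #|` C2|.
Proof.
have empty C C' : saturated_in C -> saturated_in C' -> C = fset0 -> C' = fset0.
  move=> satC [[C'P _] _] eC; apply/eqP; apply: contraT => /fset0Pn[y yC'].
  by rewrite eC in satC; case: (saturated_fset0 satC (C'P y yC')).
move=> sat1 sat2.
have [e1|ne1] := eqVneq C1 fset0; first by rewrite e1 (empty _ _ sat1 sat2 e1).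
have [e2|ne2] := eqVneq C2 fset0.
  by move: ne1; rewrite (empty _ _ sat2 sat1 e2) eqxx.
have [x1 [z1 [max1 min1 ->]]] := saturated_extremal sat1 ne1.
have [x2 [z2 [max2 min2 ->]]] := saturated_extremal sat2 ne2.
by rewrite (maximal_uniq max1 max2) (minimal_uniq min1 min2).
Qed.

End RankedChains.

Local Open Scope mset_scope.

Section MultisetSums.
Variable K : choiceType.
Implicit Types (A B : {mset K}) (F : K -> nat).

Lemma perm_msetD A B : perm_eq (A `+` B) (A ++ B).
Proof. by apply/allP => x _; rewrite /= count_cat !count_mem_mset msetE2. Qed.

Lemma big_msetD A B F :
  \sum_(x <- A `+` B) F x = \sum_(x <- A) F x + \sum_(x <- B) F x.
Proof. by rewrite (perm_big _ (perm_msetD A B)) big_cat. Qed.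

Lemma big_mset2 x y F : \sum_(z <- [mset x; y]) F z = F x + F y.
Proof. by rewrite big_msetD !enum_msetn !big_seq1. Qed.

Lemma msetD2_decomp A x y :
  x \in A -> y \in A `\ x -> exists M, A = M `+` [mset x; y].
Proof.
move=> xA yAx; exists (A `\ x `\ y).
by rewrite -{1}(msetB1K xA) -{1}(msetB1K yAx) msetDA msetDC.
Qed.

Lemma in_msetB1_neq A x y : y != x -> (y \in A `\ x) = (y \in A).
Proof. by move=> yx; rewrite in_msetB1 (negbTE yx). Qed.

End MultisetSums.

(* Lets [\sum_(x <- D)] range over the members of a diagram [D]. *)
Local Identity Coercion mset_of_diagram : diagram >-> multiset.

Local Ltac mset_lia := apply/msetP => w; rewrite !msetE2 !msetnE; lia.

Lemma Some_eqE (a b : nat) : (Some a == Some b) = (a == b).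
Proof. by []. Qed.

Lemma mcountE (D : diagram) (P : pred member) : mcount D P = \sum_(x <- D) P x.
Proof.
rewrite /mcount -big_mkcond /= sum_mset.
by apply: eq_bigr => x _; rewrite muln1.
Qed.

Lemma mcount_pair (M : diagram) x y P :
  mcount (M `+` [mset x; y]) P = mcount M P + (P x + P y).
Proof. by rewrite !mcountE big_msetD big_mset2. Qed.

Lemma replace2_decomp (D : diagram) x y x' y' : [mset x; y] `<=` D ->
  exists M, D = M `+` [mset x; y] /\ replace2 D x y x' y' = M `+` [mset x'; y'].
Proof. by move=> sub; exists (D `\` [mset x; y]); rewrite /replace2 msetBDK. Qed.

Definition wf_diagram (D : diagram) : Prop :=
  forall x, x \in D -> well_formed_member x.

Definition simple_diagram (D : diagram) : Prop :=
  forall i, 0 < i -> mcount D (touches i) <= 1.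

Lemma simple_pair M x y i : simple_diagram (M `+` [mset x; y]) -> 0 < i ->
  touches i x -> touches i y -> False.
Proof.
move=> simD i_gt0 tx ty; have := simD i i_gt0.
by rewrite mcountE big_msetD big_mset2 tx ty addnC.
Qed.

Lemma simple_touch_uniq D x y i : simple_diagram D -> 0 < i ->
  x \in D -> y \in D `\ x -> touches i x -> touches i y -> False.
Proof.
move=> simD i_gt0 xD yDx; have [M eD] := msetD2_decomp xD yDx.
by rewrite eD in simD; apply: simple_pair simD i_gt0.
Qed.

Lemma simple_disjoint M x y z i : simple_diagram (M `+` [mset x; y]) -> 0 < i ->
  z \in M -> touches i x || touches i y -> ~~ touches i z.
Proof.
move=> simD i_gt0 zM txy; have := simD i i_gt0.
have := leq_term_sum_seq (touches i) zM.
rewrite mcountE big_msetD big_mset2; case: (touches i z) txy => //=; lia.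
Qed.

Inductive target_move : diagram -> diagram -> Prop :=
| TargetMoveA M a b c d of d < c & c < b & b < a :
    target_move (M `+` [mset (Some a, c); (Some b, d)])
                (M `+` [mset (Some a, d); (Some b, c)])
| TargetMoveB M a b c of c < b & b < a :
    target_move (M `+` [mset (Some a, c); (None, b)])
                (M `+` [mset (Some a, b); (None, c)]).

Lemma target_move_move D E : target_move D E -> move D E.
Proof.
case=> [M a b c d dc cb ba | M a b c cb ba];
  [left; exists a, b, c, d | right; left; exists a, b, c];
  rewrite ?dc cb ba /replace2 msetDKBC; do 2!split=> //;
  by apply/msubsetP => w; rewrite [X in _ <= X]msetE2 leq_addl.
Qed.

Lemma target_moveA_eq (M D E : diagram) a b c d : d < c -> c < b -> b < a ->
  D = M `+` [mset (Some a, c); (Some b, d)] -> E = M `+` [mset (Some a, d); (Some b, c)] ->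
  target_move D E.
Proof. by move=> dc cb ba -> ->; apply: TargetMoveA. Qed.

Lemma target_moveB_eq (M D E : diagram) a b c : c < b -> b < a ->
  D = M `+` [mset (Some a, c); (None, b)] -> E = M `+` [mset (Some a, b); (None, c)] ->
  target_move D E.
Proof. by move=> cb ba -> ->; apply: TargetMoveB. Qed.

Definition src_below (k : nat) (x : member) : bool :=
  if x.1 is Some m then m < k else false.

Definition arcs_below (k : nat) (D : diagram) : nat := \sum_(x <- D) src_below k x.

Lemma arcs_below_pair k M x y :
  arcs_below k (M `+` [mset x; y]) = arcs_below k M + (src_below k x + src_below k y).
Proof. by rewrite /arcs_below big_msetD big_mset2. Qed.

Lemma sum_ord_eq (m k : nat) : \sum_(i < k) (m == i) = (m < k).
Proof. by elim: k => [|k IHk]; rewrite ?big_ord0 // big_ord_recr /= IHk; lia. Qed.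

Lemma arcs_below_sources k D :
  arcs_below k D = \sum_(i < k) mcount D (fun x => x.1 == Some (i : nat)).
Proof.
under [RHS]eq_bigr => i _ do rewrite mcountE.
rewrite exchange_big; apply: eq_bigr => [[[m|] t]] _ /=; last by rewrite big1.
by rewrite -sum_ord_eq; apply: eq_bigr.
Qed.

Lemma move_arcs_below D E : move D E ->
  (forall k, arcs_below k D <= arcs_below k E) /\
  (target_move D E \/ exists k, arcs_below k D < arcs_below k E).
Proof.
case=> [[a [b [c [d [/and3P[dc cb ba] [sub ->]]]]]]|
       [[a [b [c [/andP[cb ba] [sub ->]]]]]|
       [[a [b [c [d [/and3P[dc cb ba] [sub ->]]]]]]|
        [a [b [c [/andP[cb ba] [sub ->]]]]]]]].
- have [M [-> ->]] := replace2_decomp (Some a, d) (Some b, c) sub.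
  split=> [k|]; first by rewrite !arcs_below_pair /src_below /=; lia.
  by left; apply: TargetMoveA.
- have [M [-> ->]] := replace2_decomp (Some a, b) (None, c) sub.
  split=> [k|]; first by rewrite !arcs_below_pair /src_below /=; lia.
  by left; apply: TargetMoveB.
- have [M [-> ->]] := replace2_decomp (Some a, b) (Some c, d) sub.
  split=> [k|]; first by rewrite !arcs_below_pair /src_below /=; lia.
  by right; exists b; rewrite !arcs_below_pair /src_below /=; lia.
- have [M [-> ->]] := replace2_decomp (Some b, c) (None, a) sub.
  split=> [k|]; first by rewrite !arcs_below_pair /src_below /=; lia.
  by right; exists a; rewrite !arcs_below_pair /src_below /=; lia.
Qed.

Local Notation target_path := (clos_refl_trans_1n diagram target_move).

Lemma target_move_arc_le D E : target_move D E -> arc_le E D.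
Proof. by move/target_move_move; apply: rt_step. Qed.

Lemma target_path_arc_le V U : target_path V U -> arc_le U V.
Proof.
elim=> [|x y z /target_move_move xy _ yz]; first exact: rt_refl.
exact: rt_trans (rt_step _ _ _ _ xy) yz.
Qed.

Lemma move_path_arcs_below k V U :
  clos_refl_trans_1n diagram move V U -> arcs_below k V <= arcs_below k U.
Proof. by elim=> // x y z /move_arcs_below[le_xy _] _; apply: leq_trans. Qed.

(* A pole is compared as an arc with source at infinity. *)
Definition src_gt (o o' : option nat) : bool :=
  match o, o' with
  | None, Some _ => true
  | Some a, Some b => b < a
  | _, _ => false
  end.

Definition nests (x y : member) : bool := (x.2 < y.2) && src_gt x.1 y.1.

Definition nestings (D : diagram) : nat := \sum_(x <- D) \sum_(y <- D) nests x y.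

Definition nestings_with (x y z : member) : nat :=
  (nests x z + nests y z) + (nests z x + nests z y).

Lemma nests_irr x : nests x x = false.
Proof. by rewrite /nests ltnn. Qed.

Lemma nestings_pair M x y : nestings (M `+` [mset x; y]) =
  nestings M + \sum_(z <- M) nestings_with x y z + (nests x y + nests y x).
Proof.
rewrite /nestings big_msetD big_mset2.
under eq_bigr => z _ do rewrite big_msetD big_mset2.
rewrite !(big_msetD M) !big_mset2 !nests_irr /nestings_with !big_split /=; lia.
Qed.

Lemma nestings_replace (M : diagram) x y x' y' (Q : pred member) :
  simple_diagram (M `+` [mset x; y]) ->
  (forall z, (forall i, 0 < i -> touches i x || touches i y -> ~~ touches i z) ->
     nestings_with x y z <= nestings_with x' y' z /\
     (nestings_with x y z < nestings_with x' y' z -> Q z)) ->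
  nests x y + nests y x = 0 -> nests x' y' + nests y' x' = 1 ->
  nestings (M `+` [mset x; y]) < nestings (M `+` [mset x'; y']) /\
  (nestings (M `+` [mset x; y]) + 1 < nestings (M `+` [mset x'; y']) ->
     exists2 z, z \in M & Q z).
Proof.
move=> simD with_z nxy nxy'.
have {}with_z z : z \in M -> nestings_with x y z <= nestings_with x' y' z /\
    (nestings_with x y z < nestings_with x' y' z -> Q z).
  by move=> zM; apply: with_z => i i_gt0; apply: simple_disjoint simD i_gt0 zM.
have le_sum : \sum_(z <- M) nestings_with x y z <= \sum_(z <- M) nestings_with x' y' z.
  by apply: leq_sum_seq => z /with_z[].
rewrite !nestings_pair nxy nxy'; split=> [|long]; first lia.
have lt_sum : \sum_(z <- M) nestings_with x y z < \sum_(z <- M) nestings_with x' y' z.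
  by lia.
by have [z zM /(with_z z zM).2] := ltn_sum_seq_witness lt_sum; exists z.
Qed.

(* The difference of the two sides is [(q - p) * (s - r)]. *)
Lemma cross_leqif (p q r s : bool) :
  ((p ==> q) && (r ==> s)) || ((q ==> p) && (s ==> r)) ->
  (p && s) + (q && r) <= (q && s) + (p && r) ?= iff (p == q) || (r == s).
Proof. by case: p; case: q; case: r; case: s. Qed.

Lemma nestings_with_moveA a b c d z : d < c -> c < b -> b < a -> 0 < d ->
  (forall i, 0 < i -> touches i (Some a, c) || touches i (Some b, d) -> ~~ touches i z) ->
  nestings_with (Some a, c) (Some b, d) z <= nestings_with (Some a, d) (Some b, c) z /\
  (nestings_with (Some a, c) (Some b, d) z < nestings_with (Some a, d) (Some b, c) z ->
     [&& d < z.2, z.2 < c, src_gt z.1 (Some b) & src_gt (Some a) z.1]).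
Proof.
move=> dc cb ba d_gt0 away.
have [za zb zc zd] : [/\ ~~ touches a z, ~~ touches b z, ~~ touches c z & ~~ touches d z].
  by split; apply: away; rewrite /touches ?eqxx ?orbT //; lia.
case: z za zb zc zd {away} => oz t; rewrite /touches /= => za zb zc zd.
have out : ((c < t) ==> (d < t)) && (src_gt (Some b) oz ==> src_gt (Some a) oz) ||
           ((d < t) ==> (c < t)) && (src_gt (Some a) oz ==> src_gt (Some b) oz).
  by case: oz za zb zc zd => [o|] /= *; apply/orP; left; apply/andP; split; apply/implyP; lia.
have inn : ((t < c) ==> (t < d)) && (src_gt oz (Some b) ==> src_gt oz (Some a)) ||
           ((t < d) ==> (t < c)) && (src_gt oz (Some a) ==> src_gt oz (Some b)).
  by case: oz za zb zc zd {out} => [o|] /= *; apply/orP; right; apply/andP; split; apply/implyP; lia.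
have [le_with eq_with] := leqif_add (cross_leqif out) (cross_leqif inn).
split=> [|/ltn_eqF]; first exact: le_with.
rewrite /nestings_with /nests /= eq_with => /negbT; rewrite negb_and !negb_or.
by case: oz za zb zc zd {out inn le_with eq_with} => [o|] /=; rewrite ?Some_eqE; lia.
Qed.

Lemma nestings_with_moveB a b c z : c < b -> b < a -> 0 < c ->
  (forall i, 0 < i -> touches i (Some a, c) || touches i (None, b) -> ~~ touches i z) ->
  nestings_with (Some a, c) (None, b) z <= nestings_with (Some a, b) (None, c) z /\
  (nestings_with (Some a, c) (None, b) z < nestings_with (Some a, b) (None, c) z ->
     [&& c < z.2, z.2 < b & src_gt z.1 (Some a)]).
Proof.
move=> cb ba c_gt0 away.
have [za zb zc] : [/\ ~~ touches a z, ~~ touches b z & ~~ touches c z].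
  by split; apply: away; rewrite /touches ?eqxx ?orbT //; lia.
case: z za zb zc {away} => oz t; rewrite /touches /= => za zb zc.
have out : ((c < t) ==> (b < t)) && (src_gt None oz ==> src_gt (Some a) oz) ||
           ((b < t) ==> (c < t)) && (src_gt (Some a) oz ==> src_gt None oz).
  by case: oz za zb zc => [o|] /= *; apply/orP; right; apply/andP; split; apply/implyP; lia.
have inn : ((t < c) ==> (t < b)) && (src_gt oz None ==> src_gt oz (Some a)) ||
           ((t < b) ==> (t < c)) && (src_gt oz (Some a) ==> src_gt oz None).
  by case: oz za zb zc {out} => [o|] /= *; apply/orP; left; apply/andP; split; apply/implyP; lia.
have [le_with eq_with] := leqif_add (cross_leqif out) (cross_leqif inn).
split=> [|/ltn_eqF]; first exact: le_with.
rewrite /nestings_with /nests /= eq_with => /negbT; rewrite negb_and !negb_or.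
by case: oz za zb zc {out inn le_with eq_with} => [o|] /=; rewrite ?Some_eqE; lia.
Qed.

Lemma nestings_moveA (M : diagram) a b c d : d < c -> c < b -> b < a ->
  simple_diagram (M `+` [mset (Some a, c); (Some b, d)]) ->
  wf_diagram (M `+` [mset (Some a, c); (Some b, d)]) ->
  nestings (M `+` [mset (Some a, c); (Some b, d)])
    < nestings (M `+` [mset (Some a, d); (Some b, c)]) /\
  (nestings (M `+` [mset (Some a, c); (Some b, d)]) + 1
     < nestings (M `+` [mset (Some a, d); (Some b, c)]) ->
   exists2 z, z \in M & [&& d < z.2, z.2 < c, src_gt z.1 (Some b) & src_gt (Some a) z.1]).
Proof.
move=> dc cb ba simD wfD.
have /andP[d_gt0 _] : well_formed_member (Some b, d).
  by apply: wfD; rewrite !in_msetD !in_mset1 eqxx !orbT.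
apply: nestings_replace simD (fun z => nestings_with_moveA dc cb ba d_gt0) _ _;
  rewrite /nests /=; lia.
Qed.

Lemma nestings_moveB (M : diagram) a b c : c < b -> b < a ->
  simple_diagram (M `+` [mset (Some a, c); (None, b)]) ->
  wf_diagram (M `+` [mset (Some a, c); (None, b)]) ->
  nestings (M `+` [mset (Some a, c); (None, b)])
    < nestings (M `+` [mset (Some a, b); (None, c)]) /\
  (nestings (M `+` [mset (Some a, c); (None, b)]) + 1
     < nestings (M `+` [mset (Some a, b); (None, c)]) ->
   exists2 z, z \in M & [&& c < z.2, z.2 < b & src_gt z.1 (Some a)]).
Proof.
move=> cb ba simD wfD.
have /andP[c_gt0 _] : well_formed_member (Some a, c).
  by apply: wfD; rewrite !in_msetD !in_mset1 eqxx !orbT.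
apply: nestings_replace simD (fun z => nestings_with_moveB cb ba c_gt0) _ _;
  rewrite /nests /=; lia.
Qed.

Lemma target_move_nestings D E : simple_diagram D -> wf_diagram D ->
  target_move D E -> nestings D < nestings E.
Proof.
move=> + + mv; case: mv => [M a b c d dc cb ba | M a b c cb ba] simD wfD.
  exact: (nestings_moveA dc cb ba simD wfD).1.
exact: (nestings_moveB cb ba simD wfD).1.
Qed.

(* A target move raising [nestings] by more than one factors through
   two or three target moves, using a member that lies between the moved ones. *)
Lemma target_move_split V U : simple_diagram V -> wf_diagram V ->
  target_move V U -> nestings V + 1 < nestings U ->
  exists F G, [/\ target_move V F, target_move F G & target_path G U].
Proof.
move=> + + mv; case: mv => [M a b c d dc cb ba | M a b c cb ba] simV wfV long.
- have [[[o|] t] zM /and4P[/= dt tc bo oa]] := (nestings_moveA dc cb ba simV wfV).2 long;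
    last by [].
  rewrite -(msetB1K zM); set M0 := M `\ _.
  exists (M0 `+` [mset (Some a, c)] `+` [mset (Some o, d); (Some b, t)]),
         (M0 `+` [mset (Some o, d)] `+` [mset (Some a, t); (Some b, c)]).
  split.
  + by apply: (@target_moveA_eq (M0 `+` [mset (Some a, c)]) _ _ o b t d); try lia; mset_lia.
  + by apply: (@target_moveA_eq (M0 `+` [mset (Some o, d)]) _ _ a b c t); try lia; mset_lia.
  + apply: Relation_Operators.rt1n_trans (rt1n_refl _ _ _).
    by apply: (@target_moveA_eq (M0 `+` [mset (Some b, c)]) _ _ a o t d); try lia; mset_lia.
- have [[o t] zM /and3P[/= ct tb ao]] := (nestings_moveB cb ba simV wfV).2 long.
  case: o zM ao => [m|] zM /= am; rewrite -(msetB1K zM); set M0 := M `\ _.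
  + exists (M0 `+` [mset (None, b)] `+` [mset (Some m, c); (Some a, t)]),
           (M0 `+` [mset (Some m, c)] `+` [mset (Some a, b); (None, t)]).
    split.
    * by apply: (@target_moveA_eq (M0 `+` [mset (None, b)]) _ _ m a t c); try lia; mset_lia.
    * by apply: (@target_moveB_eq (M0 `+` [mset (Some m, c)]) _ _ a b t); try lia; mset_lia.
    * apply: Relation_Operators.rt1n_trans (rt1n_refl _ _ _).
      by apply: (@target_moveB_eq (M0 `+` [mset (Some a, b)]) _ _ m t c); try lia; mset_lia.
  + exists (M0 `+` [mset (None, b)] `+` [mset (Some a, t); (None, c)]),
           ((None, t) +` M0 `+` [mset (Some a, b); (None, c)]).
    split.
    * by apply: (@target_moveB_eq (M0 `+` [mset (None, b)]) _ _ a t c); try lia; mset_lia.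
    * by apply: (@target_moveB_eq (M0 `+` [mset (None, c)]) _ _ a b t); try lia; mset_lia.
    * by apply: rt1n_refl.
Qed.

Section GammaDiagrams.
Variables (alpha beta gamma : seq nat) (Gamma : filling).
Local Notation DG := (D_Gamma alpha beta gamma Gamma).

Lemma D_Gamma_wf D : DG D -> wf_diagram D.
Proof. by case=> [[wfD _] _] x xD; apply: wfD; rewrite msuppE. Qed.

Lemma D_Gamma_replace M x y x' y' :
  well_formed_member x' -> well_formed_member y' ->
  is_arc x + is_arc y = is_arc x' + is_arc y' ->
  (forall i, touches i x + touches i y = touches i x' + touches i y') ->
  (forall i, (x.1 == Some i) + (y.1 == Some i) = (x'.1 == Some i) + (y'.1 == Some i)) ->
  DG (M `+` [mset x; y]) -> DG (M `+` [mset x'; y']).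
Proof.
move=> wfx' wfy' arcs touch srcs [[wfD [nArcs [nPoles nTouch]]] LR].
have poles : is_pole x + is_pole y = is_pole x' + is_pole y'.
  by move: arcs; rewrite /is_pole; do 4!case: (is_arc _).
split; [split; [|split; [|split]]|].
- move=> z; rewrite msuppE !in_msetD !in_mset1 => /or3P[zM|/eqP->|/eqP->] //.
  by apply: wfD; rewrite msuppE in_msetD zM.
- by rewrite mcount_pair -arcs -mcount_pair.
- by rewrite mcount_pair -poles -mcount_pair.
- by move=> i i_gt0; rewrite mcount_pair -touch -mcount_pair nTouch.
- by move=> i i_gt0; rewrite mcount_pair -srcs -mcount_pair LR.
Qed.

Lemma target_move_D_Gamma D E : target_move D E -> DG D <-> DG E.
Proof.
have wf2 (M : diagram) x y : wf_diagram (M `+` [mset x; y]) ->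
    well_formed_member x /\ well_formed_member y.
  by move=> wfD; split; apply: wfD; rewrite !in_msetD !in_mset1 eqxx ?orbT.
case=> [M a b c d dc cb ba | M a b c cb ba];
  split=> /[dup] /D_Gamma_wf /wf2[]; rewrite /well_formed_member /= => wfx wfy;
  apply: D_Gamma_replace; rewrite /well_formed_member /touches //= => *;
  rewrite ?Some_eqE; lia.
Qed.

Lemma arcs_below_D_Gamma k D E : DG D -> DG E -> arcs_below k D = arcs_below k E.
Proof.
have no_src0 F : DG F -> mcount F (fun x => x.1 == Some 0) = 0.
  move=> /D_Gamma_wf wfF; rewrite mcountE big1_seq // => -[[m|] t] /wfF /=.
    by rewrite /well_formed_member Some_eqE => /andP[t_gt0 tm]; case: eqP tm => // ->.
  by [].
move=> DGD DGE; rewrite !arcs_below_sources; apply: eq_bigr => -[[|i] _] _ /=.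
  by rewrite !no_src0.
by case: DGD => _ -> //; case: DGE => _ ->.
Qed.

Lemma arc_le_target_path U V : DG U -> DG V -> arc_le U V -> target_path V U.
Proof.
move=> DGU DGV /(clos_rt_rt1n diagram) path.
elim: path DGV DGU => [x _ _|x y z].
  exact: rt1n_refl.
move=> /move_arcs_below[_ [xy|[k lt_k]]] yz IH DGx DGz.
  have DGy := (target_move_D_Gamma xy).1 DGx.
  exact: Relation_Operators.rt1n_trans xy (IH DGy DGz).
have := leq_trans lt_k (move_path_arcs_below k yz).
by rewrite (arcs_below_D_Gamma k DGz DGx) ltnn.
Qed.

Hypothesis one_box_rows : forall i, 0 < i -> conj beta i - conj gamma i <= 1.

Lemma D_Gamma_simple D : DG D -> simple_diagram D.
Proof. by case=> [[_ [_ [_ nTouch]]] _] i i_gt0; rewrite nTouch // one_box_rows. Qed.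

Lemma D_Gamma_nestings_lt D E : DG D -> target_move D E -> nestings D < nestings E.
Proof. by move=> DGD; apply: target_move_nestings (D_Gamma_simple DGD) (D_Gamma_wf DGD). Qed.

Lemma target_path_nestings V U : DG V -> target_path V U ->
  V = U \/ nestings V < nestings U.
Proof.
move=> DGV path; elim: path DGV => [x _|x y z xy _ IH DGx]; first by left.
right; have lt_xy := D_Gamma_nestings_lt DGx xy.
by case: (IH ((target_move_D_Gamma xy).1 DGx)) => [<- //|]; apply: ltn_trans.
Qed.

Lemma arc_le_nestings U V : DG U -> DG V -> arc_le U V ->
  U = V \/ nestings V < nestings U.
Proof.
move=> DGU DGV UV.
by case: (target_path_nestings DGV (arc_le_target_path DGU DGV UV)) => [->|]; [left|right].
Qed.

Lemma arc_le_interpolate U V : DG U -> DG V -> arc_le U V ->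
  nestings V + 1 < nestings U ->
  exists2 F, DG F & [/\ arc_le U F, arc_le F V & nestings V < nestings F < nestings U].
Proof.
move=> DGU DGV UV long.
suff two_steps F G : target_move V F -> target_move F G -> target_path G U ->
    exists2 F, DG F & [/\ arc_le U F, arc_le F V & nestings V < nestings F < nestings U].
  move: two_steps long.
  case: (arc_le_target_path DGU DGV UV) => [|W U' VW [|W' U'' WW' W'U]] two_steps long.
  - by rewrite ltnNge leq_addr in long.
  - have [F [G [VF FG GU]]] :=
      target_move_split (D_Gamma_simple DGV) (D_Gamma_wf DGV) VW long.
    exact: two_steps VF FG GU.
  - exact: two_steps VW WW' W'U.
move=> VF FG GU; have DGF := (target_move_D_Gamma VF).1 DGV.
have DGG := (target_move_D_Gamma FG).1 DGF.
exists F => //; split.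
- exact/target_path_arc_le/(Relation_Operators.rt1n_trans _ _ _ _ _ FG GU).
- exact: target_move_arc_le VF.
- have := D_Gamma_nestings_lt DGV VF; have := D_Gamma_nestings_lt DGF FG.
  by case: (target_path_nestings DGG GU) => [<-|]; lia.
Qed.

Lemma D_Gamma_touch D1 D2 w i : DG D1 -> DG D2 -> 0 < i ->
  w \in D2 -> touches i w -> exists2 w', w' \in D1 & touches i w'.
Proof.
move=> [[_ [_ [_ T1]]] _] [[_ [_ [_ T2]]] _] i_gt0 wD2 tw.
have : 0 < mcount D1 (touches i).
  by rewrite T1 // -T2 // mcountE (leq_trans _ (leq_term_sum_seq _ wD2)) ?tw.
by rewrite mcountE => /sum_seq_gt0_witness[w' w'D1]; rewrite lt0b; exists w'.
Qed.

Lemma D_Gamma_source D1 D2 w s : DG D1 -> DG D2 ->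
  w \in D2 -> w.1 = Some s -> exists t, (Some s, t) \in D1.
Proof.
move=> [_ LR1] DG2 wD2 ws; have [[_ LR2] wfD2] := (DG2, D_Gamma_wf DG2).
have s_gt0 : 0 < s.
  by move: (wfD2 w wD2); rewrite /well_formed_member ws /=; lia.
have : 0 < mcount D1 (fun x => x.1 == Some s).
  rewrite LR1 // -LR2 // mcountE (leq_trans _ (leq_term_sum_seq _ wD2)) //=.
  by rewrite ws eqxx.
rewrite mcountE => /sum_seq_gt0_witness[[o t] w'D1]; rewrite lt0b => /eqP /= os.
by exists t; rewrite -os.
Qed.

Lemma D_Gamma_touch_uniq D x y i : DG D -> 0 < i ->
  x \in D -> y \in D -> x != y -> touches i x -> touches i y -> False.
Proof.
move=> DGD i_gt0 xD yD xy; apply: simple_touch_uniq (D_Gamma_simple DGD) i_gt0 xD _.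
by rewrite in_msetB1_neq 1?eq_sym.
Qed.

Lemma D_Gamma_mult1 D x : DG D -> x \in D -> D x = 1.
Proof.
move=> DGD xD; have /andP[x2_gt0 _] := D_Gamma_wf DGD xD.
have Dx_gt0 : 0 < D x by rewrite -in_mset.
suff : D x <= 1 by lia.
rewrite leqNgt -msetB11; apply/negP => xDx.
by apply: simple_touch_uniq (D_Gamma_simple DGD) x2_gt0 xD xDx _ _; rewrite /touches eqxx orbT.
Qed.

Lemma D_Gamma_eq V1 V2 : DG V1 -> DG V2 ->
  (forall s t, ((Some s, t) \in V1) = ((Some s, t) \in V2)) -> V1 = V2.
Proof.
move=> DG1 DG2 arcs.
have poles W1 W2 : DG W1 -> DG W2 ->
    (forall s t, ((Some s, t) \in W1) = ((Some s, t) \in W2)) ->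
    forall t, (None, t) \in W1 -> (None, t) \in W2.
  move=> DGW1 DGW2 arcsW t tW1; have /andP[t_gt0 _] := D_Gamma_wf DGW1 tW1.
  have tt : touches t (None, t) by rewrite /touches eqxx orbT.
  have [[o u] w2 /orP[/eqP /= ot|/eqP /= ut]] := D_Gamma_touch DGW2 DGW1 t_gt0 tW1 tt.
  - have [u' tW1'] := D_Gamma_source DGW1 DGW2 w2 ot.
    by case: (D_Gamma_touch_uniq DGW1 t_gt0 tW1 tW1' _ (_ : touches t _) (_ : touches t _));
      rewrite /touches ?eqxx ?orbT.
  - move: w2; rewrite ut; case: o => [s|] // w2; rewrite -arcsW in w2.
    by case: (D_Gamma_touch_uniq DGW1 t_gt0 tW1 w2 _ (_ : touches t _) (_ : touches t _));
      rewrite /touches ?eqxx ?orbT.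
have mem w : (w \in V1) = (w \in V2).
  case: w => [[s|] t]; first exact: arcs.
  by apply/idP/idP; apply: poles => // s t'; rewrite arcs.
apply/msetP => w; have [wV1|wV1] := boolP (w \in V1).
  by rewrite !D_Gamma_mult1 // -mem.
by rewrite (mset_eq0P wV1) (mset_eq0P (_ : w \notin V2)) // -mem.
Qed.

Lemma D_Gamma_eq_by_sources (R : diagram -> Prop) :
  (forall V1 V2 s t1 t2, DG V1 -> DG V2 -> R V1 -> R V2 ->
     (forall s' t, s' < s -> ((Some s', t) \in V1) = ((Some s', t) \in V2)) ->
     (Some s, t1) \in V1 -> (Some s, t2) \in V2 -> t1 < t2 -> False) ->
  forall V1 V2, DG V1 -> DG V2 -> R V1 -> R V2 -> V1 = V2.
Proof.
move=> conflict V1 V2 DG1 DG2 R1 R2; apply: D_Gamma_eq => // s.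
elim/ltn_ind: s => s IH t.
have half W1 W2 : DG W1 -> DG W2 -> R W1 -> R W2 ->
    (forall s' t, s' < s -> ((Some s', t) \in W1) = ((Some s', t) \in W2)) ->
    (Some s, t) \in W1 -> (Some s, t) \in W2.
  move=> DGW1 DGW2 RW1 RW2 below tW1.
  have [t' t'W2] := D_Gamma_source DGW2 DGW1 tW1 (erefl _).
  case: (ltngtP t t') => [lt|gt|-> //].
    by case: (conflict W1 W2 s t t' DGW1 DGW2 RW1 RW2 below tW1 t'W2 lt).
  case: (conflict W2 W1 s t' t DGW2 DGW1 RW2 RW1 _ t'W2 tW1 gt).
  by move=> s' u /below ->.
by apply/idP/idP; apply: half => // s' u /IH ->.
Qed.

Lemma D_Gamma_bottom_uniq V1 V2 : DG V1 -> DG V2 ->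
  (forall E, ~ target_move V1 E) -> (forall E, ~ target_move V2 E) -> V1 = V2.
Proof.
apply: (@D_Gamma_eq_by_sources (fun V => forall E, ~ target_move V E)).
move=> {V1 V2} V1 V2 s t1 t2 DG1 DG2 bot1 _ below s1 s2 t12.
have /andP[t2_gt0 t2s] : 0 < t2 < s := D_Gamma_wf DG2 s2.
have t2_touch : touches t2 (Some s, t2) by rewrite /touches eqxx orbT.
(* The member of [V1] at [t2] can only end there and cross [(s, t1)]. *)
have [[o u] w1 /orP[/eqP /= ot2|/eqP /= ut2]] := D_Gamma_touch DG1 DG2 t2_gt0 s2 t2_touch.
  have [t' t'2] := D_Gamma_source DG2 DG1 w1 ot2.
  apply: (D_Gamma_touch_uniq DG2 t2_gt0 s2 t'2); rewrite /touches ?eqxx ?orbT //.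
  by rewrite xpair_eqE Some_eqE; lia.
move: w1; rewrite ut2; case: o => [s'|] w1.
  case: (ltngtP s' s) => [s's|ss'|s's].
  - rewrite below // in w1; apply: (D_Gamma_touch_uniq DG2 t2_gt0 s2 w1);
      rewrite /touches ?eqxx ?orbT //.
    by rewrite xpair_eqE Some_eqE; lia.
  - have s1' : (Some s, t1) \in V1 `\ (Some s', t2).
      by rewrite in_msetB1_neq // xpair_eqE Some_eqE; lia.
    have [M eV1] := msetD2_decomp w1 s1'.
    apply: (bot1 (M `+` [mset (Some s', t1); (Some s, t2)])).
    by rewrite eV1; apply: TargetMoveA.
  - have s_gt0 : 0 < s by lia.
    rewrite s's in w1; apply: (D_Gamma_touch_uniq DG1 s_gt0 s1 w1);
      rewrite /touches ?eqxx //.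
    by rewrite xpair_eqE Some_eqE; lia.
have t2pole : (None, t2) \in V1 `\ (Some s, t1) by rewrite in_msetB1_neq.
have [M eV1] := msetD2_decomp s1 t2pole.
apply: (bot1 (M `+` [mset (Some s, t2); (None, t1)])).
by rewrite eV1; apply: TargetMoveB.
Qed.

Lemma D_Gamma_top_uniq V1 V2 : DG V1 -> DG V2 ->
  (forall W, DG W -> ~ target_move W V1) -> (forall W, DG W -> ~ target_move W V2) ->
  V1 = V2.
Proof.
apply: (@D_Gamma_eq_by_sources (fun V => forall W, DG W -> ~ target_move W V)).
move=> {V1 V2} V1 V2 s t1 t2 DG1 DG2 _ top2 below s1 s2 t12.
have /andP[t1_gt0 t1s] : 0 < t1 < s := D_Gamma_wf DG1 s1.
have /andP[_ t2s] : 0 < t2 < s := D_Gamma_wf DG2 s2.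
have t1_touch : touches t1 (Some s, t1) by rewrite /touches eqxx orbT.
(* The member of [V2] at [t1] can only end there and enclose [(s, t2)]. *)
have [[o u] w2 /orP[/eqP /= ot1|/eqP /= ut1]] := D_Gamma_touch DG2 DG1 t1_gt0 s1 t1_touch.
  have [t' t'1] := D_Gamma_source DG1 DG2 w2 ot1.
  apply: (D_Gamma_touch_uniq DG1 t1_gt0 s1 t'1); rewrite /touches ?eqxx ?orbT //.
  by rewrite xpair_eqE Some_eqE; lia.
move: w2; rewrite ut1; case: o => [s'|] w2.
  case: (ltngtP s' s) => [s's|ss'|s's].
  - rewrite -below // in w2; apply: (D_Gamma_touch_uniq DG1 t1_gt0 s1 w2);
      rewrite /touches ?eqxx ?orbT //.
    by rewrite xpair_eqE Some_eqE; lia.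
  - have s2' : (Some s, t2) \in V2 `\ (Some s', t1).
      by rewrite in_msetB1_neq // xpair_eqE Some_eqE; lia.
    have [M eV2] := msetD2_decomp w2 s2'.
    have mv : target_move (M `+` [mset (Some s', t2); (Some s, t1)]) V2.
      by rewrite eV2; apply: TargetMoveA.
    exact: top2 _ ((target_move_D_Gamma mv).2 DG2) mv.
  - have s_gt0 : 0 < s by lia.
    rewrite s's in w2; apply: (D_Gamma_touch_uniq DG2 s_gt0 s2 w2);
      rewrite /touches ?eqxx //.
    by rewrite xpair_eqE Some_eqE; lia.
have t1pole : (None, t1) \in V2 `\ (Some s, t2) by rewrite in_msetB1_neq.
have [M eV2] := msetD2_decomp s2 t1pole.
have mv : target_move (M `+` [mset (Some s, t1); (None, t2)]) V2.
  by rewrite eV2; apply: TargetMoveB.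
exact: top2 _ ((target_move_D_Gamma mv).2 DG2) mv.
Qed.

Lemma D_Gamma_maximal_uniq V1 V2 :
  maximal_in DG arc_le V1 -> maximal_in DG arc_le V2 -> V1 = V2.
Proof.
have no_move_in (V : diagram) : maximal_in DG arc_le V -> forall W, DG W -> ~ target_move W V.
  move=> [_ maxV] W DGW mv; have := D_Gamma_nestings_lt DGW mv.
  by rewrite -(maxV W DGW (target_move_arc_le mv)) ltnn.
move=> max1 max2.
case: (max1) (max2) => DG1 _ [DG2 _].
by apply: (D_Gamma_top_uniq DG1 DG2); apply: no_move_in.
Qed.

Lemma D_Gamma_minimal_uniq V1 V2 :
  minimal_in DG arc_le V1 -> minimal_in DG arc_le V2 -> V1 = V2.
Proof.
have no_move_out (V : diagram) : minimal_in DG arc_le V -> forall E, ~ target_move V E.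
  move=> [DGV minV] E mv; have := D_Gamma_nestings_lt DGV mv.
  have DGE := (target_move_D_Gamma mv).1 DGV.
  by rewrite (minV E DGE (target_move_arc_le mv)) ltnn.
move=> min1 min2.
case: (min1) (min2) => DG1 _ [DG2 _].
by apply: (D_Gamma_bottom_uniq DG1 DG2); apply: no_move_out.
Qed.

End GammaDiagrams.

Theorem mainTheorem3 (alpha beta gamma : seq nat) (Gamma : filling) :
  is_partition alpha -> is_partition beta -> is_partition gamma ->
  all (fun x => x <= 2) alpha ->
  (forall i, 0 < i -> conj gamma i <= conj beta i) ->
  LR_tableau alpha beta gamma Gamma ->
  (* every row of Gamma contains at most one box *)
  (forall i, 0 < i -> conj beta i - conj gamma i <= 1) ->
  forall C1 C2 : {fset diagram},
    saturated_chain alpha beta gamma Gamma C1 ->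
    saturated_chain alpha beta gamma Gamma C2 ->
    chain_length C1 = chain_length C2.
Proof.
move=> _ _ _ _ _ _ one_box_rows C1 C2 sat1 sat2; congr (_ - 1).
apply: (saturated_card_eq (le := arc_le) (rk := nestings)) sat1 sat2.
- exact: rt_refl.
- by move=> x y z xy yz; apply: rt_trans yz xy.
- exact: arc_le_nestings one_box_rows.
- exact: arc_le_interpolate one_box_rows.
- exact: D_Gamma_maximal_uniq one_box_rows.
- exact: D_Gamma_minimal_uniq one_box_rows.
Qed.
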